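(* Let $H$ be a graph and $(G,\sigma)$ a signed graph. Then $\tilde H$ is a topological minor of $(G,\sigma)$ if and only if $\tilde H$ is a total topological minor of $(G,\sigma)$.
   Context: A signed graph $(G,\sigma)$ is a graph (loops and parallel edges allowed) with a signature $\sigma:E(G)\to\{+,-\}$; the sign of a path or cycle is the product of the signs of its edges. For a graph $H$, $\tilde H$ is the signed graph obtained by replacing each edge of $H$ by two parallel edges, one positive and one negative. A signed graph $(H,\pi)$ is a topological minor of $(G,\sigma)$ if (i) some subdivision of $H$ is isomorphic to a subgraph $G_1$ of $G$, and (ii) for every cycle $C$ of $(H,\pi)$, the image of $C$ in $G_1$ has in $(G,\sigma)$ the same sign as $C$ has in $(H,\pi)$. It is a total topological minor if (i) holds and (ii') for every edge $e$ of $H$, the path $P_e$ representing $e$ in $G_1$ has sign $\pi(e)$ in $(G,\sigma)$. *)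

From mathcomp Require Import all_boot.
Set Implicit Arguments.
Unset Strict Implicit.
Unset Printing Implicit Defensive.

(* A (multi)graph, loops and parallel edges allowed, is given by a finite
   vertex type V, a finite edge type E and an endpoint map ends : E -> V * V
   (the order of the two endpoints is irrelevant; ends e = (x, x) is a loop).
   A signature is a map E -> bool, where [true] stands for the sign "-" and
   [false] for "+".  The sign of a set/sequence of edges (product of signs in
   {+,-}) is thus the xor (sum in Z/2) of the boolean signs. *)

Section Graphs.
Variables (V E : finType) (ends : E -> V * V).

Definition joins (e : E) (x y : V) : bool :=
  let: (a, b) := ends e in ((a == x) && (b == y)) || ((a == y) && (b == x)).

(* walk_from x es xs : starting at x, traverse edges es, visiting the
   vertices xs (xs has one vertex per edge; the walk ends at last x xs). *)
Fixpoint walk_from (x : V) (es : seq E) (xs : seq V) : bool :=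
  match es, xs with
  | [::], [::] => true
  | e :: es', y :: xs' => joins e x y && walk_from y es' xs'
  | _, _ => false
  end.

(* C is (the edge set of) a cycle: a closed walk of length >= 1 with no
   repeated edges and no repeated vertices (loops are cycles of length 1,
   two parallel edges form a cycle of length 2). *)
Definition is_cycle (C : {set E}) : Prop :=
  exists (x : V) (es : seq E) (xs : seq V),
    [&& es != [::], walk_from x es xs, last x xs == x, uniq es, uniq xs
      & C == [set e in es]].

End Graphs.

Section Embedding.
Variables (VH EH : finType) (endsH : EH -> VH * VH).
Variables (VG EG : finType) (endsG : EG -> VG * VG).

(* Data of a subdivision of H inside G: vertex map f, and for each edge e
   of H a path P_e in G, given by its edges pe e and the vertices pv e
   visited after its start vertex. *)
Definition interior (s : seq VG) : seq VG := take (size s).-1 s.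

Definition path_rep (f : VH -> VG) (pv : EH -> seq VG) (pe : EH -> seq EG)
  (e : EH) : bool :=
  let: (u, v) := endsH e in
  [&& pe e != [::], walk_from endsG (f u) (pe e) (pv e),
      last (f u) (pv e) == f v, uniq (pe e)
    & if u == v then uniq (pv e) else uniq (f u :: pv e)].

Definition subdivision_embedding (f : VH -> VG) (pv : EH -> seq VG)
  (pe : EH -> seq EG) : Prop :=
  [/\ injective f,
      (forall e, path_rep f pv pe e),
      (forall e x w, x \in interior (pv e) -> x != f w)
    & (forall e e', e != e' ->
         (forall x, x \in interior (pv e) -> x \notin interior (pv e')) /\
         (forall g, g \in pe e -> g \notin pe e'))].

Variables (piH : EH -> bool) (sigG : EG -> bool).

Definition seq_sign (s : seq EG) : bool := \big[addb/false]_(g <- s) sigG g.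
Definition setG_sign (S : {set EG}) : bool := \big[addb/false]_(g in S) sigG g.
Definition setH_sign (S : {set EH}) : bool := \big[addb/false]_(e in S) piH e.

Definition image_edges (pe : EH -> seq EG) (C : {set EH}) : {set EG} :=
  \bigcup_(e in C) [set g in pe e].

Definition topological_minor : Prop :=
  exists f pv pe, subdivision_embedding f pv pe /\
    forall C : {set EH}, is_cycle endsH C ->
      setG_sign (image_edges pe C) = setH_sign C.

Definition total_topological_minor : Prop :=
  exists f pv pe, subdivision_embedding f pv pe /\
    forall e : EH, seq_sign (pe e) = piH e.

End Embedding.

(* \tilde H: each edge of H doubled into a positive and a negative copy. *)
Section Tilde.
Variables (V E : finType) (ends : E -> V * V).
Definition tilde_ends (p : E * bool) : V * V := ends p.1.
Definition tilde_sign (p : E * bool) : bool := p.2.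
End Tilde.

From mathcomp Require Import all_boot.
Set Implicit Arguments.
Unset Strict Implicit.
Unset Printing Implicit Defensive.

(* The paths P_e of a subdivision are edge-disjoint, so the sign of the image
   of a cycle C is the sum of the signs of the P_e, e in C; hence a total
   topological minor is a topological minor.  Conversely, in tilde H every
   loop (e, b) is a cycle of sign b and every non-loop edge e gives a digon
   {(e, +), (e, -)} of sign -, so either P_(e,+) and P_(e,-) already carry the
   signs + and -, or they carry - and +; exchanging the two paths in the
   second case yields a total topological minor. *)

Lemma setG_sign_seq (EG : finType) (sigG : EG -> bool) (s : seq EG) :
  uniq s -> setG_sign sigG [set g in s] = seq_sign sigG s.
Proof.
by move=> uniq_s; rewrite /seq_sign big_uniq //; apply: eq_bigl => g; rewrite inE.
Qed.

Section ImageSign.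
Variables (EH EG : finType) (sigG : EG -> bool) (pe : EH -> seq EG).
Hypothesis uniq_pe : forall e, uniq (pe e).
Hypothesis disjoint_pe :
  forall e e', e != e' -> forall g, g \in pe e -> g \notin pe e'.

Lemma setG_sign_image_edges (C : {set EH}) :
  setG_sign sigG (image_edges pe C) = \big[addb/false]_(e in C) seq_sign sigG (pe e).
Proof.
pose P e := if e \in C then [set g in pe e] else set0.
have -> : image_edges pe C = \bigcup_e P e by rewrite /image_edges big_mkcond.
rewrite /setG_sign partition_disjoint_bigcup.
  rewrite [RHS]big_mkcond; apply: eq_bigr => e _; rewrite /P.
  by case: (e \in C); [exact: setG_sign_seq | rewrite big_set0].
move=> e e' ne; rewrite disjoint_subset; apply/subsetP => g; rewrite /P.
by case: (e \in C); case: (e' \in C); rewrite !inE // => /(disjoint_pe ne).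
Qed.

End ImageSign.

Section Embeddings.
Variables (VH EH : finType) (endsH : EH -> VH * VH).
Variables (VG EG : finType) (endsG : EG -> VG * VG).
Variables (f : VH -> VG) (pv : EH -> seq VG) (pe : EH -> seq EG).

Lemma path_rep_uniq e : path_rep endsH endsG f pv pe e -> uniq (pe e).
Proof. by rewrite /path_rep; case: (endsH e) => u v /and5P[]. Qed.

Lemma embedding_image_sign (sigG : EG -> bool) (C : {set EH}) :
  subdivision_embedding endsH endsG f pv pe ->
  setG_sign sigG (image_edges pe C) = \big[addb/false]_(e in C) seq_sign sigG (pe e).
Proof.
case=> _ rep _ disj; apply: setG_sign_image_edges => [e | e e' ne].
  exact: path_rep_uniq.
by case: (disj e e' ne).
Qed.

Lemma embedding_relabel (h : EH -> EH) :
  injective h -> (forall e, endsH (h e) = endsH e) ->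
  subdivision_embedding endsH endsG f pv pe ->
  subdivision_embedding endsH endsG f (pv \o h) (pe \o h).
Proof.
move=> inj_h ends_h [inj_f rep inter disj]; split => // [e | e x w | e e' ne].
- by rewrite /path_rep -ends_h; exact: rep.
- exact: inter.
- by apply: disj; apply: contra ne => /eqP /inj_h ->.
Qed.

End Embeddings.

Lemma total_topological_minor_topological (VH EH : finType)
  (endsH : EH -> VH * VH) (VG EG : finType) (endsG : EG -> VG * VG)
  (piH : EH -> bool) (sigG : EG -> bool) :
  total_topological_minor endsH endsG piH sigG ->
  topological_minor endsH endsG piH sigG.
Proof.
case=> f [pv [pe [emb total]]]; exists f, pv, pe; split => // C _.
rewrite (embedding_image_sign _ _ emb) /setH_sign.
by apply: eq_bigr => e _; rewrite total.
Qed.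

Section Tilde.
Variables (VH EH : finType) (endsH : EH -> VH * VH).

Lemma tilde_loop_cycle e u b :
  endsH e = (u, u) -> is_cycle (tilde_ends endsH) [set (e, b)].
Proof.
move=> ends_e; exists u, [:: (e, b)], [:: u].
rewrite /= /joins /tilde_ends /= ends_e eqxx /=.
by apply/eqP/setP => p; rewrite !inE.
Qed.

Lemma tilde_digon_cycle e u v : endsH e = (u, v) -> u != v ->
  is_cycle (tilde_ends endsH) [set (e, false); (e, true)].
Proof.
move=> ends_e neq_uv; exists u, [:: (e, false); (e, true)], [:: v; u].
rewrite /= /joins /tilde_ends /= ends_e !eqxx /= !inE andbT orbT /=.
rewrite (eq_sym v) neq_uv xpair_eqE eqxx /=.
by apply/eqP/setP => p; rewrite !inE.
Qed.

Definition tilde_flip (s : EH -> bool) (p : EH * bool) : EH * bool :=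
  (p.1, p.2 (+) s p.1).

Lemma tilde_flip_inj s : injective (tilde_flip s).
Proof.
case=> e b [e' b'] [<-] /(congr1 (addb^~ (s e))).
by rewrite -!addbA addbb !addbF => ->.
Qed.

Variables (VG EG : finType) (endsG : EG -> VG * VG) (sigma : EG -> bool).
Variables (f : VH -> VG) (pv : EH * bool -> seq VG) (pe : EH * bool -> seq EG).
Hypothesis emb : subdivision_embedding (tilde_ends endsH) endsG f pv pe.
Hypothesis cycle_sign : forall C, is_cycle (tilde_ends endsH) C ->
  setG_sign sigma (image_edges pe C) = setH_sign (@tilde_sign EH) C.

Let path_sign p := seq_sign sigma (pe p).

Lemma tilde_loop_path_sign e u b : endsH e = (u, u) -> path_sign (e, b) = b.
Proof.
move=> ends_e; have := cycle_sign (tilde_loop_cycle b ends_e).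
rewrite (embedding_image_sign _ _ emb) /setH_sign.
by rewrite !(big_pred1 (e, b)) // => p; rewrite inE.
Qed.

Lemma tilde_digon_path_sign e u v : endsH e = (u, v) -> u != v ->
  path_sign (e, true) = ~~ path_sign (e, false).
Proof.
move=> ends_e neq_uv; have := cycle_sign (tilde_digon_cycle ends_e neq_uv).
have notin : (e, false) \notin [set (e, true)] by rewrite inE xpair_eqE andbF.
rewrite (embedding_image_sign _ _ emb) /setH_sign !(big_setU1 _ notin).
rewrite !(big_pred1 (e, true)) => [| p | p]; try by rewrite inE.
by rewrite /path_sign; case: (seq_sign _ (pe (e, false))); case: (seq_sign _ _).
Qed.

Lemma tilde_flip_path_sign e b :
  path_sign (tilde_flip (fun e => path_sign (e, false)) (e, b)) = b.
Proof.
rewrite /tilde_flip /=; case ends_e: (endsH e) => [u v].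
have [eq_uv | neq_uv] := eqVneq u v.
  by rewrite eq_uv in ends_e; rewrite !(tilde_loop_path_sign _ ends_e) addbF.
have := tilde_digon_path_sign ends_e neq_uv; rewrite /path_sign.
by case c: (seq_sign _ (pe (e, false))) => digon; case: b; rewrite /= ?c ?digon.
Qed.

End Tilde.

Theorem mainTheorem4 (VH EH : finType) (endsH : EH -> VH * VH)
  (VG EG : finType) (endsG : EG -> VG * VG) (sigma : EG -> bool) :
  topological_minor (tilde_ends endsH) endsG (@tilde_sign EH) sigma <->
  total_topological_minor (tilde_ends endsH) endsG (@tilde_sign EH) sigma.
Proof.
split; last exact: total_topological_minor_topological.
case=> f [pv [pe [emb cycle_sign]]].
pose flip := tilde_flip (fun e => seq_sign sigma (pe (e, false))).
exists f, (pv \o flip), (pe \o flip); split.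
  by apply: embedding_relabel emb; [exact: tilde_flip_inj | by []].
by case=> e b; exact: (tilde_flip_path_sign emb cycle_sign).
Qed.
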